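(* Let $k\ge1$ and $m\ge0$ be integers. The sum of the ending heights over all $k$-Dyck prefixes with exactly $m$ up-steps whose last step is an up-step (equivalently, the total number of down-steps needed to return to the $x$-axis, summed over these prefixes) equals $$\frac1{1+(m+1)(k+1)}\binom{1+(m+1)(k+1)}{m+1}-\frac1{1+m(k+1)}\binom{1+m(k+1)}{m}.$$
   Context: A $k$-Dyck prefix is a lattice path starting at $(0,0)$ with up-steps $(1,k)$ and down-steps $(1,-1)$ that never goes below the $x$-axis; the height of a point is its $y$-coordinate. *)

From mathcomp Require Import all_boot all_order all_algebra.
Set Implicit Arguments. Unset Strict Implicit. Unset Printing Implicit Defensive.
Import Order.TTheory GRing.Theory Num.Theory.
Local Open Scope ring_scope.

(* A lattice path is a sequence of steps: [true] = up-step (1,k),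
   [false] = down-step (1,-1). *)
Definition step_val (k : nat) (b : bool) : int := if b then k%:Z else (-1)%R.

Definition height (k : nat) (p : seq bool) : int := \sum_(b <- p) step_val k b.

Definition is_kDyck_prefix (k : nat) (p : seq bool) : Prop :=
  forall i : nat, (i <= size p)%N -> 0 <= height k (take i p).

Definition num_up (p : seq bool) : nat := count id p.

Definition kDyck_last_up (k m : nat) (p : seq bool) : Prop :=
  [/\ is_kDyck_prefix k p, num_up p = m, p != [::] & last false p = true].

From mathcomp Require Import all_boot all_order all_algebra.
From mathcomp Require Import zify.
Import Order.TTheory GRing.Theory Num.Theory.
Local Open Scope ring_scope.

(* A first passage is a path that ends at height -1 and stays nonnegative
   before.  With j up-steps it has 1 + j(k+1) steps, and by the cycle lemma
   exactly one rotation of each word with these step counts is a first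
   passage, so there are F_j = C(1 + j(k+1), j) / (1 + j(k+1)) of them.
   Appending an up-step and then the down-steps that first reach -1 maps the
   k-Dyck prefixes with j up-steps bijectively onto the first passages with
   j + 1 up-steps, so there are F_{j+1} such prefixes.  A prefix with m >= 1
   up-steps is uniquely q followed by at most height(q) down-steps, where q
   ends with an up-step, and deleting that last up-step is a bijection onto
   the prefixes with m - 1 up-steps.  Hence, over the prefixes q with m >= 1
   up-steps ending with an up-step, the sum of height(q) + 1 is F_{m+1} and
   their number is F_m; for m = 0 there are none and F_1 = F_0 = 1. *)

Lemma size_bij_in (T U : eqType) (A : seq T) (B : seq U) (f : T -> U) :
  uniq A -> uniq B -> {in A &, injective f} -> B =i map f A -> size A = size B.
Proof.
move=> uA uB f_inj eqB; rewrite -(size_map f); apply: perm_size.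
by apply: uniq_perm; rewrite ?map_inj_in_uniq.
Qed.

Lemma cons_inj (T : Type) (x : T) : injective (cons x).
Proof. by move=> s1 s2 []. Qed.

Lemma nseqSr (T : Type) (j : nat) (x : T) : nseq j.+1 x = rcons (nseq j x) x.
Proof. by elim: j => //= j ->. Qed.

Lemma count_nseq_false (j : nat) : count id (nseq j false) = 0%N.
Proof. by elim: j. Qed.

Lemma take_cat_le (T : Type) j (s1 s2 : seq T) :
  (j <= size s1)%N -> take j (s1 ++ s2) = take j s1.
Proof.
rewrite leq_eqVlt => /orP [/eqP ->|lt_j]; last by rewrite take_cat lt_j.
by rewrite take_cat ltnn subnn take0 cats0 take_size.
Qed.

Lemma split_last_true (p : seq bool) : (0 < count id p)%N ->
  exists a t, p = rcons a true ++ nseq t false.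
Proof.
elim/last_ind: p => [|p b IHp] //; rewrite -cats1 count_cat /= addn0.
case: b => /= p_up; first by exists p, 0%N; rewrite cats0 cats1.
have [a [t ->]] := IHp ltac:(lia); exists a, t.+1.
by rewrite -catA cats1 -nseqSr.
Qed.

Lemma split_last_true_inj (a a' : seq bool) t t' :
  rcons a true ++ nseq t false = rcons a' true ++ nseq t' false -> a = a' /\ t = t'.
Proof.
elim: t t' => [|t IHt] [|t'] //; rewrite ?cats0 ?nseqSr -?rcons_cat.
- by move/rcons_inj => [].
- by move/rcons_inj.
- by move/rcons_inj.
- by move/rcons_inj => [/IHt [-> ->]].
Qed.

Lemma mem_map_cons (T : eqType) (x y : T) (w : seq T) s :
  (y :: w \in map (cons x) s) = (y == x) && (w \in s).
Proof.
by apply/mapP/andP => [[v v_s [-> ->]]|[/eqP -> w_s]]; last exists w.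
Qed.

Lemma mem_nil_map_cons (T : eqType) (x : T) s : ([::] \in map (cons x) s) = false.
Proof. by apply/mapP => -[]. Qed.

Fixpoint words_upto (n : nat) : seq (seq bool) :=
  if n is n'.+1 then
    [::] :: map (cons true) (words_upto n') ++ map (cons false) (words_upto n')
  else [:: [::]].

Lemma mem_words_upto n w : (w \in words_upto n) = (size w <= n)%N.
Proof.
elim: n w => [|n IHn] [|b w] //=.
by rewrite in_cons mem_cat !mem_map_cons !IHn ltnS; case: b; rewrite /= ?orbF.
Qed.

Lemma uniq_words_upto n : uniq (words_upto n).
Proof.
elim: n => //= n IHn; rewrite mem_cat !mem_nil_map_cons cat_uniq.
rewrite !map_inj_uniq ?IHn //; try exact: cons_inj.
by rewrite /= andbT; apply/hasPn => _ /mapP [w _ ->]; rewrite mem_map_cons.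
Qed.

Fixpoint words (n m : nat) : seq (seq bool) :=
  if n is n'.+1 then
    (if m is m'.+1 then map (cons true) (words n' m') else [::])
    ++ map (cons false) (words n' m)
  else if m is 0 then [:: [::]] else [::].

Lemma size_words n m : size (words n m) = 'C(n, m).
Proof.
elim: n m => [|n IHn] [|m] //=; rewrite ?size_cat !size_map !IHn ?bin0 //.
by rewrite binS addnC.
Qed.

Lemma mem_words n m w : (w \in words n m) = (size w == n) && (count id w == m).
Proof.
elim: n m w => [|n IHn] [|m] [|b w] //=; rewrite ?mem_cat ?mem_nil_map_cons //.
  by rewrite mem_map_cons IHn; case: b; rewrite /= ?add1n ?add0n ?eqSS ?andbF.
by rewrite !mem_map_cons !IHn; case: b; rewrite /= ?add1n ?add0n ?eqSS ?andbF ?orbF.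
Qed.

Lemma uniq_words n m : uniq (words n m).
Proof.
elim: n m => [|n IHn] [|m] //=; rewrite ?cat_uniq !map_inj_uniq ?IHn //; try exact: cons_inj.
by rewrite andbT; apply/hasPn => _ /mapP [w _ ->]; rewrite mem_map_cons.
Qed.

Lemma count_rot (T : eqType) (a : pred T) r (s : seq T) : count a (rot r s) = count a s.
Proof. by apply/permP; rewrite perm_rot. Qed.

Lemma perm_map_rot_words r n m : perm_eq (map (rot r) (words n m)) (words n m).
Proof.
apply: uniq_perm; rewrite ?map_inj_uniq ?uniq_words //; first exact: rot_inj.
move=> w; apply/mapP/idP => [[v v_words ->]|w_words].
  by rewrite !mem_words size_rot count_rot in v_words *.
exists (rotr r w); last by rewrite rotrK.
by rewrite mem_words -(size_rot r) -(count_rot _ _ r) rotrK -mem_words.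
Qed.

Section Paths.
Variable k : nat.
Implicit Types (a p q w : seq bool).

Lemma height_nil : height k [::] = 0.
Proof. by rewrite /height big_nil. Qed.

Lemma height_cons b p : height k (b :: p) = step_val k b + height k p.
Proof. by rewrite /height big_cons. Qed.

Lemma height_cat p q : height k (p ++ q) = height k p + height k q.
Proof. by rewrite /height big_cat. Qed.

Lemma height_rcons p b : height k (rcons p b) = height k p + step_val k b.
Proof. by rewrite -cats1 height_cat height_cons height_nil addr0. Qed.

Lemma height_nseq_false j : height k (nseq j false) = - j%:Z.
Proof. by elim: j => [|j IHj]; rewrite ?height_nil // height_cons IHj /step_val; lia. Qed.

Lemma height_count p :
  height k p = (k * count id p)%N%:Z - (size p - count id p)%N%:Z.
Proof.
elim: p => [|b p IHp]; first by rewrite height_nil muln0.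
by rewrite height_cons IHp /step_val; have := count_size id p; case: b => /=; lia.
Qed.

Lemma height_rot r p : height k (rot r p) = height k p.
Proof. by apply: perm_big; rewrite perm_rot. Qed.

Definition dyck_prefixb p :=
  all (fun i => 0 <= height k (take i p)) (iota 0 (size p).+1).

Lemma dyck_prefixP p : reflect (is_kDyck_prefix k p) (dyck_prefixb p).
Proof.
apply: (iffP allP) => [dyck_p i le_i|dyck_p i]; last by rewrite mem_iota => /dyck_p.
by apply: dyck_p; rewrite mem_iota.
Qed.

Lemma dyck_prefix_height {p} : dyck_prefixb p -> 0 <= height k p.
Proof. by move/allP/(_ (size p)); rewrite take_size mem_iota leqnn; apply. Qed.

Lemma dyck_prefixb_rcons p b :
  dyck_prefixb (rcons p b) = dyck_prefixb p && (0 <= height k (rcons p b)).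
Proof.
rewrite /dyck_prefixb size_rcons -addn1 iotaD all_cat add0n.
congr andb; last by rewrite /= andbT take_oversize ?size_rcons.
by apply: eq_in_all => i; rewrite mem_iota -cats1 => /andP [_ /take_cat_le ->].
Qed.

Lemma dyck_prefixb_cat_nseq_false p j :
  dyck_prefixb (p ++ nseq j false) = dyck_prefixb p && (j%:Z <= height k p).
Proof.
elim: j => [|j IHj].
  by rewrite cats0; case: (boolP (dyck_prefixb p)) => // /dyck_prefix_height ->.
rewrite nseqSr -rcons_cat dyck_prefixb_rcons IHj height_rcons height_cat height_nseq_false.
case: (dyck_prefixb p) => //=; rewrite /step_val.
by apply/andP/idP => [[? ?]|?]; [lia | split; lia].
Qed.

Lemma dyck_prefix_size {p} : dyck_prefixb p -> (size p <= count id p * k.+1)%N.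
Proof.
move/dyck_prefix_height; rewrite height_count mulnS.
by have := count_size id p; lia.
Qed.

Definition nheight p : nat := `|height k p|%N.

Lemma nheightE {p} : dyck_prefixb p -> (nheight p)%:Z = height k p.
Proof. by move/dyck_prefix_height; rewrite /nheight => /gez0_abs. Qed.

Definition first_passage w :=
  (height k w == -1) && all (fun i => 0 <= height k (take i w)) (iota 0 (size w)).

Lemma first_passage_rcons p b :
  first_passage (rcons p b) = (height k (rcons p b) == -1) && dyck_prefixb p.
Proof.
rewrite /first_passage /dyck_prefixb size_rcons; congr andb.
by apply: eq_in_all => i; rewrite mem_iota -cats1 => /andP [_ /take_cat_le ->].
Qed.

Lemma first_passage_last_up a t :
  first_passage (rcons a true ++ nseq t false) =
  dyck_prefixb a && (t == nheight a + k.+1)%N.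
Proof.
case: (boolP (dyck_prefixb a)) => [dyck_a|not_dyck_a]; last first.
  rewrite andFb; case: t => [|t]; rewrite ?cats0 ?nseqSr -?rcons_cat first_passage_rcons.
    by rewrite (negbTE not_dyck_a) andbF.
  by rewrite dyck_prefixb_cat_nseq_false dyck_prefixb_rcons (negbTE not_dyck_a) andbF.
have := nheightE dyck_a; have := dyck_prefix_height dyck_a.
case: t => [|t]; rewrite ?cats0 ?nseqSr -?rcons_cat first_passage_rcons.
  by rewrite dyck_a height_rcons /step_val /=; lia.
rewrite dyck_prefixb_cat_nseq_false dyck_prefixb_rcons dyck_a.
by rewrite !height_rcons height_cat height_nseq_false height_rcons /step_val /=; lia.
Qed.

Section CycleLemma.
Variable w : seq bool.
Hypothesis height_w : height k w = -1.
Let n := size w.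
Let s i := height k (take i w).
Let first_argmin N r :=
  [/\ (r < N)%N, forall i, (i < N)%N -> s r <= s i & forall i, (i < r)%N -> s r < s i].

Lemma height_take_rot r j : (r <= n)%N -> (j <= n - r)%N ->
  height k (take j (rot r w)) = s (r + j)%N - s r.
Proof.
move=> le_r le_j; rewrite /rot take_cat_le ?size_drop //.
by rewrite /s takeD height_cat addrC addKr.
Qed.

Lemma height_take_rot_wrap r t : (r <= n)%N -> (t <= r)%N ->
  height k (take (n - r + t) (rot r w)) = -1 - s r + s t.
Proof.
move=> le_r le_t; rewrite /rot take_cat size_drop ltnNge leq_addr /= addKn.
have split_w : height k w = s r + height k (drop r w).
  by rewrite -height_cat cat_take_drop.
by rewrite take_takel // height_cat -height_w split_w /s; lia.
Qed.

Lemma first_passage_rotP {r} : (r < n)%N ->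
  first_passage (rot r w) <-> first_argmin n r.
Proof.
move=> lt_r; rewrite /first_passage height_rot height_w eqxx size_rot -/n.
split=> [/allP fp_rot|[_ min_r first_r]].
- have first_r i : (i < r)%N -> s r < s i.
    move=> lt_ir; have := fp_rot (n - r + i)%N.
    by rewrite mem_iota height_take_rot_wrap; [move/(_ ltac:(lia)); lia|lia|lia].
  split=> // i lt_i; case: (ltnP i r) => [lt_ir|le_ri]; first by have := first_r i lt_ir; lia.
  have := fp_rot (i - r)%N; rewrite mem_iota height_take_rot ?subnKC; [|lia|lia|lia].
  by move/(_ ltac:(lia)); lia.
- apply/allP => j; rewrite mem_iota => /andP [_ lt_j].
  case: (ltnP j (n - r)) => [lt_jr|le_rj].
    by rewrite height_take_rot; [have := min_r (r + j)%N ltac:(lia); lia|lia|lia].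
  rewrite -(subnKC le_rj) height_take_rot_wrap; [|lia|lia].
  by have := first_r (j - (n - r))%N ltac:(lia); lia.
Qed.

Lemma exists_first_argmin N : exists r, first_argmin N.+1 r.
Proof.
elim: N => [|N [r [lt_r min_r first_r]]].
  by exists 0%N; split=> // i; rewrite ltnS leqn0 => /eqP ->.
case: (ltP (s N.+1) (s r)) => [lt_Nr|le_rN].
  exists N.+1; split=> // i lt_i; last by have := min_r i lt_i; lia.
  by case: (ltnP i N.+1) => [/min_r|le_Ni]; [lia|have -> : i = N.+1 by lia].
exists r; split=> // [|i lt_i]; first lia.
by case: (ltnP i N.+1) => [/min_r //|le_Ni]; have -> : i = N.+1 by lia.
Qed.

Lemma cycle_lemma : count (fun r => first_passage (rot r w)) (iota 0 n) = 1%N.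
Proof.
have n_gt0 : (0 < n)%N.
  by rewrite lt0n size_eq0; apply: contra_eqN height_w => /eqP ->; rewrite height_nil.
have [r0 argmin_r0] := exists_first_argmin n.-1.
rewrite (prednK n_gt0) in argmin_r0; have [lt_r0 min_r0 first_r0] := argmin_r0.
rewrite (@eq_in_count _ _ (pred1 r0)); last first.
  move=> r; rewrite mem_iota add0n => /andP [_ lt_r].
  apply/idP/eqP => [/(first_passage_rotP lt_r) [_ min_r first_r]|->]; last first.
    exact/(first_passage_rotP lt_r0).
  case: (ltngtP r r0) => // [/first_r0|/first_r]; [have := min_r r0|have := min_r0 r]; lia.
by rewrite count_uniq_mem ?iota_uniq // mem_iota lt_r0.
Qed.

End CycleLemma.

End Paths.

Lemma height_words {k m w} : w \in words (1 + m * k.+1) m -> height k w = -1.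
Proof. by rewrite mem_words height_count => /andP [/eqP -> /eqP ->]; rewrite mulnSr; lia. Qed.

Definition num_first_passages k m := count (first_passage k) (words (1 + m * k.+1) m).

Lemma num_first_passages_mul k m :
  ((1 + m * k.+1) * num_first_passages k m = 'C(1 + m * k.+1, m))%N.
Proof.
rewrite /num_first_passages; set n := (1 + m * k.+1)%N; set Ws := words n m.
transitivity (\sum_(r <- iota 0 n) \sum_(w <- Ws | first_passage k (rot r w)) 1)%N.
  under eq_bigr => r _ do
    rewrite sum1_count -(count_map (rot r)) (permP (perm_map_rot_words r n m)).
  by rewrite big_const_seq count_predT size_iota iter_addn_0 mulnC.
rewrite (exchange_big_dep predT) // -(size_words n m) -sum1_size.
apply: eq_big_seq => w w_Ws; rewrite sum1_count.
have /andP [/eqP size_w _] : (size w == n) && (count id w == m) by rewrite -mem_words.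
by rewrite -size_w (cycle_lemma k w (height_words w_Ws)).
Qed.

Lemma first_passage_size {k w} : first_passage k w -> size w = (1 + count id w * k.+1)%N.
Proof. by case/andP; rewrite height_count => /eqP; have := count_size id w; lia. Qed.

Lemma mem_first_passages k m w :
  (w \in [seq v <- words (1 + m * k.+1) m | first_passage k v]) =
  first_passage k w && (count id w == m).
Proof.
rewrite mem_filter mem_words.
apply/andP/andP => [[fp_w /andP [_ ->]]|[fp_w /eqP count_w]] //.
by split; rewrite // (first_passage_size fp_w) count_w !eqxx.
Qed.

Lemma count_rcons_true_nseq (a : seq bool) t :
  count id (rcons a true ++ nseq t false) = (count id a).+1.
Proof. by rewrite count_cat count_nseq_false addn0 -cats1 count_cat addn1. Qed.

Definition dyck_prefixes k m :=
  [seq p <- words_upto (m * k.+1) | dyck_prefixb k p && (count id p == m)].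

Definition dyck_prefixes_last_up k m := [seq p <- dyck_prefixes k m | last false p].

Lemma mem_dyck_prefixes k m p :
  (p \in dyck_prefixes k m) = dyck_prefixb k p && (count id p == m).
Proof.
rewrite mem_filter mem_words_upto andb_idr // => /andP [dyck_p /eqP <-].
exact: (dyck_prefix_size k dyck_p).
Qed.

Lemma uniq_dyck_prefixes k m : uniq (dyck_prefixes k m).
Proof. exact/filter_uniq/uniq_words_upto. Qed.

Lemma mem_dyck_prefixes_last_up k m p :
  (p \in dyck_prefixes_last_up k m) = [&& dyck_prefixb k p, count id p == m & last false p].
Proof. by rewrite mem_filter mem_dyck_prefixes andbC -andbA. Qed.

Lemma size_dyck_prefixes k m :
  size (dyck_prefixes k m) = num_first_passages k m.+1.
Proof.
rewrite /num_first_passages -size_filter.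
apply: (@size_bij_in _ _ _ _ (fun a => rcons a true ++ nseq (nheight k a + k.+1) false)).
- exact: uniq_dyck_prefixes.
- exact/filter_uniq/uniq_words.
- by move=> a b _ _ /split_last_true_inj [].
move=> w; rewrite mem_first_passages; apply/andP/mapP => [[fp_w /eqP count_w]|[a]].
  have [a [t def_w]] := split_last_true w ltac:(lia).
  move: fp_w count_w; rewrite def_w first_passage_last_up count_rcons_true_nseq.
  case/andP=> dyck_a /eqP -> [count_a].
  by exists a => //; rewrite mem_dyck_prefixes dyck_a count_a eqxx.
rewrite mem_dyck_prefixes => /andP [dyck_a /eqP count_a] ->.
by rewrite first_passage_last_up count_rcons_true_nseq dyck_a count_a !eqxx.
Qed.

Lemma size_dyck_prefixes_last_up k m :
  size (dyck_prefixes_last_up k m.+1) = size (dyck_prefixes k m).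
Proof.
apply/esym/(@size_bij_in _ _ _ _ (rcons^~ true)).
- exact: uniq_dyck_prefixes.
- exact/filter_uniq/uniq_dyck_prefixes.
- by move=> a b _ _ /rcons_inj [].
move=> w; rewrite mem_dyck_prefixes_last_up; apply/and3P/mapP => [[]|[a]].
  case/lastP: w => // a b; rewrite dyck_prefixb_rcons last_rcons => /andP [dyck_a _] + b_true.
  rewrite b_true -cats1 count_cat addn1 => /eqP [count_a].
  by exists a; rewrite ?cats1 // mem_dyck_prefixes dyck_a count_a eqxx.
rewrite mem_dyck_prefixes => /andP [dyck_a /eqP count_a] ->.
rewrite dyck_prefixb_rcons dyck_a height_rcons last_rcons -cats1 count_cat count_a addn1.
by split=> //; have := dyck_prefix_height k dyck_a; rewrite /step_val; lia.
Qed.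

Lemma size_dyck_prefixesS k m :
  size (dyck_prefixes k m.+1) = (\sum_(q <- dyck_prefixes_last_up k m.+1) (nheight k q).+1)%N.
Proof.
set L := dyck_prefixes_last_up k m.+1.
have -> : (\sum_(q <- L) (nheight k q).+1)%N =
    size [seq q ++ nseq j false | q <- L, j <- iota 0 (nheight k q).+1].
  by rewrite size_allpairs_dep sumnE big_map; apply: eq_bigr => q _; rewrite size_iota.
apply: perm_size; apply: uniq_perm.
- exact: uniq_dyck_prefixes.
- apply: allpairs_uniq_dep => [|q _|]; first exact/filter_uniq/uniq_dyck_prefixes.
    exact: iota_uniq.
  move=> _ _ /allpairsPdep [q1 [j1 [L_q1 _ ->]]] /allpairsPdep [q2 [j2 [L_q2 _ ->]]] /=.
  move: L_q1 L_q2; rewrite !mem_dyck_prefixes_last_up => /and3P [_ _ last_q1] /and3P [_ _].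
  case/lastP: q1 last_q1 => // a1 b1; case/lastP: q2 => // a2 b2; rewrite !last_rcons => -> ->.
  by case/split_last_true_inj => -> ->.
move=> p; rewrite mem_dyck_prefixes; apply/andP/allpairsPdep => [[dyck_p /eqP count_p]|].
  have [a [t def_p]] := split_last_true p ltac:(lia).
  move: dyck_p count_p; rewrite def_p dyck_prefixb_cat_nseq_false count_rcons_true_nseq.
  case/andP=> dyck_q le_t [count_a]; exists (rcons a true), t; split=> //.
    by rewrite mem_dyck_prefixes_last_up dyck_q last_rcons -cats1 count_cat count_a addn1 eqxx.
  by rewrite mem_iota add0n ltnS; have := nheightE k dyck_q; lia.
move=> [q [j [L_q]]]; rewrite mem_iota add0n ltnS => le_j ->.
move: L_q; rewrite mem_dyck_prefixes_last_up => /and3P [dyck_q /eqP count_q _].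
rewrite dyck_prefixb_cat_nseq_false count_cat count_nseq_false dyck_q count_q addn0.
by split=> //; have := nheightE k dyck_q; lia.
Qed.

Lemma dyck_prefixes0 k : dyck_prefixes k 0 = [:: [::]].
Proof. by rewrite /dyck_prefixes /= /dyck_prefixb /= height_nil. Qed.

Lemma sum_nheight_last_up k m :
  (\sum_(q <- dyck_prefixes_last_up k m) nheight k q + num_first_passages k m
   = num_first_passages k m.+1)%N.
Proof.
case: m => [|m].
  have := num_first_passages_mul k 0; rewrite mul0n addn0 bin0 mul1n => ->.
  by rewrite -size_dyck_prefixes /dyck_prefixes_last_up dyck_prefixes0 big_nil.
rewrite -!size_dyck_prefixes -size_dyck_prefixes_last_up -sum1_size size_dyck_prefixesS.
by under [RHS]eq_bigr do rewrite -addn1; rewrite big_split.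
Qed.

Lemma num_first_passagesE k m :
  (num_first_passages k m)%:R =
  ((1 + m * k.+1)%N%:R)^-1 * ('C(1 + m * k.+1, m))%:R :> rat.
Proof. by rewrite -num_first_passages_mul natrM mulKf ?pnatr_eq0. Qed.

Theorem mainTheorem4 (k m : nat) (hk : (1 <= k)%N) :
  exists s : seq (seq bool),
    [/\ uniq s,
        (forall p, p \in s <-> kDyck_last_up k m p) &
        ((\sum_(p <- s) height k p)%:~R : rat) =
          ((1 + (m.+1) * (k.+1))%N%:R)^-1 * ('C(1 + (m.+1) * (k.+1), m.+1))%:R
        - ((1 + m * (k.+1))%N%:R)^-1 * ('C(1 + m * (k.+1), m))%:R].
Proof.
exists (dyck_prefixes_last_up k m); split.
- exact/filter_uniq/uniq_dyck_prefixes.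
- move=> p; rewrite mem_dyck_prefixes_last_up /kDyck_last_up /num_up.
  split=> [/and3P [/dyck_prefixP dyck_p /eqP count_p last_p]|[/dyck_prefixP -> -> _ ->]].
    by split=> //; case: p last_p {dyck_p count_p}.
  by rewrite eqxx.
rewrite -!num_first_passagesE -(sum_nheight_last_up k m) natrD addrK natr_sum rmorph_sum.
apply: eq_big_seq => q; rewrite mem_dyck_prefixes_last_up => /and3P [dyck_q _ _].
by rewrite -(nheightE k dyck_q).
Qed.
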